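(* Let $n\ge 2$ and let $A\in\mathbb{R}^{n\times n}$ be a nonnegative hollow tridiagonal matrix (so $A_{ii}=0$ for all $i$ and $A_{ij}=0$ when $|i-j|>1$) such that $A_{i,i+1}A_{i+1,i}=0$ for each $i\in\{1,\dots,n-1\}$, and $A_{i,i+1}>0$ for at least one $i$. Then $r(t):=r\big((1-t)A+tA^{\top}\big)$ is strictly concave in $t$ on $(0,1)$.
   Context: $r(M)$ denotes the spectral radius of a square matrix $M$. *)

From HB Require Import structures.
From mathcomp Require Import all_boot all_order all_algebra.
From mathcomp Require Import complex.
From mathcomp Require Import boolp classical_sets reals.
Set Implicit Arguments. Unset Strict Implicit. Unset Printing Implicit Defensive.
Import Order.TTheory GRing.Theory Num.Theory.
Local Open Scope ring_scope.
Local Open Scope classical_set_scope.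

Definition cplx_mx (R : rcfType) (n : nat) (A : 'M[R]_n) : 'M[R[i]]_n :=
  map_mx (fun x => x%:C%C) A.

Definition spectrum (R : rcfType) (n : nat) (A : 'M[R]_n) : set R[i] :=
  [set z | root (char_poly (cplx_mx A)) z].

(* Spectral radius r(A) = max { |z| : z eigenvalue of A } (finite nonempty set
   for n >= 1, so sup = max). *)
Definition spectral_radius (R : realType) (n : nat) (A : 'M[R]_n) : R :=
  sup [set ComplexField.Normc.normc z | z in spectrum A].

Definition nonneg_mx (R : realType) (n : nat) (A : 'M[R]_n) : Prop :=
  forall i j, 0 <= A i j.

Definition hollow_mx (R : realType) (n : nat) (A : 'M[R]_n) : Prop :=
  forall i, A i i = 0.

Definition tridiagonal_mx (R : realType) (n : nat) (A : 'M[R]_n) : Prop :=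
  forall i j : 'I_n, (i.+1 < j)%N \/ (j.+1 < i)%N -> A i j = 0.

Definition strictly_concave_on (R : realType) (a b : R) (f : R -> R) : Prop :=
  forall s t l : R, a < s < b -> a < t < b -> s != t -> 0 < l < 1 ->
    (1 - l) * f s + l * f t < f ((1 - l) * s + l * t).

From HB Require Import structures.
From mathcomp Require Import all_boot all_order all_algebra.
From mathcomp Require Import complex.
From mathcomp Require Import boolp classical_sets reals.
From mathcomp Require Import ring lra zify.
Set Implicit Arguments. Unset Strict Implicit. Unset Printing Implicit Defensive.
Import Order.TTheory GRing.Theory Num.Theory.
Local Open Scope ring_scope.
Local Open Scope classical_set_scope.

(* Write p = sqrt t and q = sqrt (1 - t).  Since at most one of A(i,i+1),
   A(i+1,i) is nonzero, conjugating q^2 A + p^2 A^T by a diagonal matrix whose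
   consecutive entries have ratio p/q or q/p (according to which of the two
   entries vanishes) turns it into p q (A + A^T).  Hence
   r(t) = sqrt (t (1 - t)) r(A + A^T), and r(A + A^T) > 0 because a nonzero
   real symmetric matrix has a nonzero eigenvalue (spectral theorem).  Finally
   sqrt (t (1 - t)) is strictly concave, being the square root of a positive
   strictly concave function. *)

Section StrictConcavity.
Variable R : realType.
Implicit Types (a b c x y s t l : R) (f g : R -> R).

Lemma convex_comb_in_itv a b s t l : a < s < b -> a < t < b -> 0 < l < 1 ->
  a < (1 - l) * s + l * t < b.
Proof. by move=> /andP[? ?] /andP[? ?] /andP[? ?]; apply/andP; split; nra. Qed.

Lemma strictly_concave_on_eq a b f g :
  (forall t, a < t < b -> f t = g t) ->
  strictly_concave_on a b f -> strictly_concave_on a b g.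
Proof.
move=> fg cf s t l sI tI st lI.
by rewrite -!fg ?cf ?convex_comb_in_itv.
Qed.

Lemma strictly_concave_scale a b c f : 0 < c ->
  strictly_concave_on a b f -> strictly_concave_on a b (fun t => c * f t).
Proof.
move=> c0 cf s t l sI tI st lI.
by rewrite mulrCA [l * _]mulrCA -mulrDr ltr_pM2l ?cf.
Qed.

Lemma strictly_concave_mul_subr a b :
  strictly_concave_on a b (fun t => t * (1 - t)).
Proof.
move=> s t l _ _ st /andP[l0 l1]; rewrite -subr_gt0.
have -> : ((1 - l) * s + l * t) * (1 - ((1 - l) * s + l * t))
    - ((1 - l) * (s * (1 - s)) + l * (t * (1 - t))) = l * (1 - l) * (s - t) ^+ 2.
  by ring.
have st2 : 0 < (s - t) ^+ 2 by rewrite exprn_even_gt0 // subr_eq0.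
by rewrite mulr_gt0 // mulr_gt0 ?subr_gt0.
Qed.

Lemma sqrtr_concave x y l : 0 <= x -> 0 <= y -> 0 <= l <= 1 ->
  (1 - l) * Num.sqrt x + l * Num.sqrt y <= Num.sqrt ((1 - l) * x + l * y).
Proof.
move=> x0 y0 /andP[l0 l1].
rewrite -[x in Num.sqrt (_ * x + _)]sqr_sqrtr //.
rewrite -[y in Num.sqrt (_ + _ * y)]sqr_sqrtr //.
move: (Num.sqrt x) (Num.sqrt y) (sqrtr_ge0 x) (sqrtr_ge0 y) => u v u0 v0.
have lhs0 : 0 <= (1 - l) * u + l * v by rewrite addr_ge0 ?mulr_ge0 ?subr_ge0.
rewrite -(ler_pXn2r (_ : 0 < 2)%N) ?nnegrE ?sqrtr_ge0 // sqr_sqrtr; last first.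
  by rewrite addr_ge0 ?mulr_ge0 ?sqr_ge0 ?subr_ge0.
rewrite -subr_ge0.
have -> : (1 - l) * u ^+ 2 + l * v ^+ 2 - ((1 - l) * u + l * v) ^+ 2
    = l * (1 - l) * (u - v) ^+ 2 by ring.
by rewrite mulr_ge0 ?sqr_ge0 // mulr_ge0 ?subr_ge0.
Qed.

Lemma strictly_concave_sqrtr a b f :
  (forall t, a < t < b -> 0 <= f t) ->
  strictly_concave_on a b f -> strictly_concave_on a b (fun t => Num.sqrt (f t)).
Proof.
move=> f0 cf s t l sI tI st lI; have /andP[l0 l1] := lI.
have lt_fm := cf s t l sI tI st lI.
apply: le_lt_trans (sqrtr_concave (l := l) (f0 _ sI) (f0 _ tI) _) _.
  by rewrite !ltW.
rewrite ltr_sqrt //; apply: le_lt_trans lt_fm.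
by rewrite addr_ge0 ?mulr_ge0 ?f0 ?subr_ge0 ?ltW.
Qed.

End StrictConcavity.

Section Eigenvalues.
Variables (F : fieldType) (n : nat).
Implicit Types (f V : 'M[F]_n) (a c : F).

Lemma eigenvalue_uconjmx V f : V \in unitmx ->
  eigenvalue (conjmx V f) =1 eigenvalue f.
Proof.
move=> Vu a; apply/idP/idP.
  by apply: eigenvalue_conjmx; rewrite ?stablemx_unit ?row_free_unit.
rewrite -{1}(conjmxK f Vu); apply: eigenvalue_conjmx.
  by rewrite stablemx_unit ?unitmx_inv.
by rewrite row_free_unit unitmx_inv.
Qed.

Lemma eigenvalueZ c f a : c != 0 -> eigenvalue (c *: f) (c * a) = eigenvalue f a.
Proof.
move=> c0; apply/eigenvalueP/eigenvalueP => -[v fv v0]; exists v => //.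
  by apply: (scalerI c0); rewrite scalemxAr fv !scalerA mulrC.
by rewrite -scalemxAr fv !scalerA mulrC.
Qed.

Lemma eigenvalue_diag_mx (d : 'rV[F]_n) i : eigenvalue (diag_mx d) (d 0 i).
Proof.
apply/eigenvalueP; exists (delta_mx 0 i); last first.
  by apply/eqP => /matrixP /(_ 0 i) /eqP; rewrite !mxE !eqxx oner_eq0.
apply/matrixP => a b; rewrite mul_mx_diag !mxE.
by have [->|] := eqVneq b i; rewrite ?andbF ?mulr0n ?mul0r ?mulr0 // mulrC.
Qed.

End Eigenvalues.

Lemma normalmx_eq0 (C : numClosedFieldType) n (A : 'M[C]_n) :
  A \is normalmx -> (forall a, eigenvalue A a -> a = 0) -> A = 0.
Proof.
move=> /orthomx_spectralP defA eig0.
have Pu := spectral_unit A.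
suff sp0 : spectral_diag A = 0 by rewrite defA sp0 raddf0 mulmx0 mul0mx.
apply/rowP => i; rewrite mxE; apply: eig0.
by rewrite {1}defA -conjVmx // eigenvalue_uconjmx ?unitmx_inv // eigenvalue_diag_mx.
Qed.

Local Notation normc := ComplexField.Normc.normc.

Section Spectrum.
Variable R : rcfType.

Lemma spectrumE n (M : 'M[R]_n) : spectrum M = [set z | eigenvalue (cplx_mx M) z].
Proof. by apply/funext => z; rewrite /spectrum /= -eigenvalue_root_char. Qed.

Lemma spectrum_diag_conj n (M B : 'M[R]_n) (s : R) (e : 'I_n -> R) :
  s != 0 -> (forall i, e i != 0) -> (forall i j, M i j = s * e i * B i j / e j) ->
  spectrum M = [set s%:C%C * z | z in spectrum B].
Proof.
move=> s0 e0 defM; pose D := diag_mx (\row_i (e i)%:C%C).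
have sC0 : s%:C%C != 0 by rewrite (inj_eq (@complexI R)).
have Du : D \in unitmx.
  rewrite unitmxE det_diag unitfE; apply/prodf_neq0 => i _.
  by rewrite mxE (inj_eq (@complexI R)).
rewrite !spectrumE; have -> : cplx_mx M = conjmx D (s%:C%C *: cplx_mx B).
  apply/esym/eqP/(similarP Du); rewrite mul_diag_mx mul_mx_diag.
  apply/eq_mx => i j; rewrite !mxE defM !rmorphM rmorphV ?unitfE //=.
  by rewrite divfK ?(inj_eq (@complexI R)) // mulrCA mulrA.
apply/seteqP; split => z /=; rewrite eigenvalue_uconjmx //.
  move=> Mz; exists (s%:C%C^-1 * z); last exact: mulVKf.
  by rewrite /= -(eigenvalueZ _ _ sC0) mulVKf.
by case=> w Bw <-; rewrite eigenvalueZ.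
Qed.

Lemma spectrum_neq0 n (M : 'M[R]_n.+1) : spectrum M !=set0.
Proof.
have [z Mz] := eigenvalue_closed (cplx_mx M) (ltn0Sn n).
by exists z; rewrite spectrumE.
Qed.

Lemma spectrum_sym_neq0 n (B : 'M[R]_n) : B^T = B -> B != 0 ->
  exists2 z, spectrum B z & z != 0.
Proof.
move=> Bsym B0; apply: contrapT => no_nz; move/eqP: B0; apply.
apply/eqP; rewrite -(map_mx_eq0 (real_complex R)); apply/eqP/normalmx_eq0.
  apply: symmetric_normalmx.
    by apply/is_hermitianmxP; rewrite expr0 scale1r map_mx_id // map_trmx Bsym.
  by apply/mxOverP => i j; rewrite mxE; apply/complex_realP; exists (B i j).
move=> a Ba; apply/eqP; apply: contra_notT no_nz => a0.
by exists a; rewrite // spectrumE.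
Qed.

End Spectrum.

Section SpectralRadius.
Variable R : realType.

Lemma normc_ge0 (z : R[i]) : 0 <= normc z.
Proof. by case: z => a b; apply: sqrtr_ge0. Qed.

Lemma normc_gt0 (z : R[i]) : z != 0 -> 0 < normc z.
Proof.
move=> z0; rewrite lt_def normc_ge0 andbT.
by apply: contra z0 => /eqP/ComplexField.Normc.eq0_normc ->.
Qed.

Lemma normc_real (s : R) : 0 <= s -> normc s%:C%C = s.
Proof.
by move=> s0; rewrite /ComplexField.Normc.normc /= expr0n addr0 sqrtr_sqr ger0_norm.
Qed.

Lemma has_sup_spectral_norms n (M : 'M[R]_n.+1) :
  has_sup [set normc z | z in spectrum M].
Proof.
split; first by have [z Mz] := spectrum_neq0 M; exists (normc z), z.
have [r defp] := closed_field_poly_normal (char_poly (cplx_mx M)).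
exists (\big[Num.max/0]_(w <- r) normc w) => _ [z Mz <-].
apply: le_bigmax_seq => //; move: Mz; rewrite /spectrum /= defp.
by rewrite (monicP (char_poly_monic _)) scale1r root_prod_XsubC.
Qed.

Lemma sup_scale (X : set R) (s : R) : 0 < s -> has_sup X ->
  sup [set s * x | x in X] = s * sup X.
Proof.
move=> s0 supX; have [[x Xx] _] := supX.
have sX0 : [set s * x | x in X] !=set0 by exists (s * x), x.
apply/le_anti/andP; split.
  by apply: ge_sup sX0 _ => _ [y Xy <-]; rewrite ler_pM2l // sup_upper_bound.
rewrite -ler_pdivlMl //; apply: ge_sup (ex_intro _ x Xx) _ => y Xy.
rewrite ler_pdivlMl //; apply: sup_upper_bound; last by exists y.
split => //; exists (s * sup X) => _ [z Xz <-].
by rewrite ler_pM2l // sup_upper_bound.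
Qed.

Lemma spectral_radius_diag_conj n (M B : 'M[R]_n.+1) (s : R) (e : 'I_n.+1 -> R) :
  0 < s -> (forall i, e i != 0) -> (forall i j, M i j = s * e i * B i j / e j) ->
  spectral_radius M = s * spectral_radius B.
Proof.
move=> s0 e0 defM; have supB := has_sup_spectral_norms B.
rewrite /spectral_radius -sup_scale //.
rewrite (spectrum_diag_conj (lt0r_neq0 s0) e0 defM); congr sup.
have normc_sz z : normc (s%:C%C * z) = s * normc z.
  by rewrite ComplexField.Normc.normcM normc_real ?ltW.
apply/seteqP; split => _ [_ [z Bz <-] <-].
  by rewrite normc_sz; exists (normc z) => //; exists z.
by rewrite -normc_sz; exists (s%:C%C * z) => //; exists z.
Qed.

Lemma spectral_radius_sym_gt0 n (B : 'M[R]_n.+1) : B^T = B -> B != 0 ->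
  0 < spectral_radius B.
Proof.
move=> Bsym B0; have [z Bz z0] := spectrum_sym_neq0 Bsym B0.
apply: lt_le_trans (normc_gt0 z0) _.
by apply: sup_upper_bound; [exact: has_sup_spectral_norms | exists z].
Qed.

End SpectralRadius.

Section TridiagonalSymmetrization.
Variable R : realType.

Definition chain_ratio (p q a : R) : R := if 0 < a then p / q else q / p.

Lemma chain_ratio_neq0 p q a : 0 < p -> 0 < q -> chain_ratio p q a != 0.
Proof.
move=> p0 q0; rewrite /chain_ratio.
by case: ifP => _; rewrite mulf_neq0 ?invr_eq0 ?lt0r_neq0.
Qed.

Lemma chain_ratio_balance p q a b : 0 < p -> 0 < q -> 0 <= a -> a * b = 0 ->
  (q ^+ 2 * a + p ^+ 2 * b = p * q * (a + b) / chain_ratio p q a) *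
  (q ^+ 2 * b + p ^+ 2 * a = p * q * (a + b) * chain_ratio p q a).
Proof.
move=> p0 q0 a0 ab0; rewrite /chain_ratio; case: ifP => [a_gt0|a_ngt0].
  have -> : b = 0 by move/eqP: ab0; rewrite mulf_eq0 gt_eqF //= => /eqP.
  by split; field; rewrite !lt0r_neq0.
have -> : a = 0 by apply/eqP; rewrite eq_le a0 leNgt a_ngt0.
by split; field; rewrite !lt0r_neq0.
Qed.

Variables (n : nat) (A : 'M[R]_n.+1) (p q : R).
Hypotheses (p_gt0 : 0 < p) (q_gt0 : 0 < q).
Hypotheses (A_ge0 : nonneg_mx A) (A_hollow : hollow_mx A) (A_tri : tridiagonal_mx A).
Hypothesis A_skew : forall i j : 'I_n.+1, nat_of_ord j = i.+1 -> A i j * A j i = 0.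

Definition tridiag_weight (i : 'I_n.+1) : R :=
  \prod_(k < i) chain_ratio p q (A (inord k) (inord k.+1)).

Lemma tridiag_weight_neq0 i : tridiag_weight i != 0.
Proof. by apply/prodf_neq0 => k _; apply: chain_ratio_neq0. Qed.

Lemma tridiag_weightS (i j : 'I_n.+1) : nat_of_ord j = i.+1 ->
  tridiag_weight j = tridiag_weight i * chain_ratio p q (A i j).
Proof.
move=> ji; rewrite /tridiag_weight ji big_ord_recr /= inord_val.
suff -> : inord i.+1 = j by [].
by apply: val_inj; rewrite /= inordK // -ji.
Qed.

Lemma hollow_tridiag_offband (i j : 'I_n.+1) :
  nat_of_ord j != i.+1 -> nat_of_ord i != j.+1 -> A i j = 0.
Proof.
move=> ji ij; have [->|i_neq_j] := eqVneq i j; first exact: A_hollow.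
apply: A_tri; move: i_neq_j; rewrite -val_eqE /=; lia.
Qed.

Lemma tridiag_conj_entry i j :
  (q ^+ 2 *: A + p ^+ 2 *: A^T) i j =
  p * q * tridiag_weight i * (A + A^T) i j / tridiag_weight j.
Proof.
have w0 := tridiag_weight_neq0; have g0 a := chain_ratio_neq0 a p_gt0 q_gt0.
rewrite !mxE; have [ji|ji] := eqVneq (nat_of_ord j) i.+1.
  rewrite (tridiag_weightS ji).
  rewrite (chain_ratio_balance p_gt0 q_gt0 (A_ge0 i j) (A_skew ji)).1.
  by field; rewrite w0 g0.
have [ij|ij] := eqVneq (nat_of_ord i) j.+1.
  rewrite (tridiag_weightS ij).
  rewrite (chain_ratio_balance p_gt0 q_gt0 (A_ge0 j i) (A_skew ij)).2.
  by field; rewrite w0.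
by rewrite !hollow_tridiag_offband // !(mulr0, mul0r, addr0).
Qed.

End TridiagonalSymmetrization.

Theorem corollary1 (R : realType) (n : nat) (A : 'M[R]_n) :
  (2 <= n)%N ->
  nonneg_mx A -> hollow_mx A -> tridiagonal_mx A ->
  (forall i j : 'I_n, nat_of_ord j = i.+1 -> A i j * A j i = 0) ->
  (exists i j : 'I_n, nat_of_ord j = i.+1 /\ 0 < A i j) ->
  strictly_concave_on 0 1
    (fun t : R => spectral_radius ((1 - t) *: A + t *: A^T)).
Proof.
case: n A => [|[|n]] // A _ A_ge0 A_hollow A_tri A_skew [i0 [j0 [_ A_gt0]]].
set rho := spectral_radius (A + A^T).
have rho_gt0 : 0 < rho.
  apply: spectral_radius_sym_gt0; first by rewrite linearD /= trmxK addrC.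
  apply: contraTneq A_gt0 => /matrixP /(_ i0 j0) /eqP.
  by rewrite !mxE paddr_eq0 ?A_ge0 // => /andP[/eqP-> _]; rewrite ltxx.
have rho_sqrt t : 0 < t < 1 ->
    rho * Num.sqrt (t * (1 - t)) = spectral_radius ((1 - t) *: A + t *: A^T).
  move=> /andP[t_gt0 t_lt1]; set p := Num.sqrt t; set q := Num.sqrt (1 - t).
  have p_gt0 : 0 < p by rewrite sqrtr_gt0.
  have q_gt0 : 0 < q by rewrite sqrtr_gt0 subr_gt0.
  have -> : (1 - t) *: A + t *: A^T = q ^+ 2 *: A + p ^+ 2 *: A^T.
    by rewrite !sqr_sqrtr ?subr_ge0 ?ltW.
  rewrite sqrtrM ?ltW // mulrC -/p -/q.
  by rewrite (spectral_radius_diag_conj _ (tridiag_weight_neq0 A p_gt0 q_gt0)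
    (tridiag_conj_entry p_gt0 q_gt0 A_ge0 A_hollow A_tri A_skew)) ?mulr_gt0.
apply: strictly_concave_on_eq rho_sqrt _; apply: strictly_concave_scale rho_gt0 _.
apply: strictly_concave_sqrtr; last exact: strictly_concave_mul_subr.
by move=> t /andP[t0 t1]; rewrite mulr_ge0 ?subr_ge0 ?ltW.
Qed.
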